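(* Let $G$ be any strategic game with players $1,\dots,n$. For every belief model $(\Omega,\bar s_1,\dots,\bar s_n,P_1,\dots,P_n)$ for $G$, $$[\![\mathit{rat}_{gbr}]\!]\cap[\![\Box^*\mathit{rat}_{gbr}]\!]\subseteq[\![\nu X.\,O_{lsd}X]\!].$$
   Context: Strategic game $G=(T_1,\dots,T_n,<_1,\dots,<_n)$: arbitrary nonempty $T_i$, $<_i$ total linear order on $T=\prod_iT_i$, $\ge_i$ reflexive closure. Restriction: $S=(S_1,\dots,S_n)$, $S_i\subseteq T_i$. $\mathcal{L}_O$ and optimality models: first-order formulas over atoms $C(a)$, $a\ge^i_cb$ and constant $o$; in $(G,G',s)$ with assignment $\alpha$ ($o\mapsto s$): $C(x)$ iff $\alpha(x)_j\in G'_j$ for all $j$; $x\ge^i_zy$ iff $(\alpha(x)_i,\alpha(z)_{-i})\ge_i(\alpha(y)_i,\alpha(z)_{-i})$. $gbr_i:=\exists z(C(z)\wedge\forall y\;o\ge^i_zy)$; $lsd_i:=\forall y(C(y)\to\exists z(C(z)\wedge o\ge^i_zy))$. Belief model: $\Omega\ne\emptyset$, $\bar s_i:\Omega\to T_i$, $P_i:\Omega\to2^\Omega$, $\bar s(\omega)=(\bar s_i(\omega))_i$, $(G_E)_i=\{\bar s_i(u):u\in E\}$. Semantics: $[\![\mathit{rat}_{\phi_i}]\!]_E=\{\omega:(G,G_{P_i(\omega)},\bar s(\omega))\models\phi_i\}$, $[\![X]\!]_E=E$, $\wedge,\neg$ as intersection/complement, $[\![\Box_i\psi]\!]_E=\{\omega:P_i(\omega)\subseteq[\![\psi]\!]_E\}$,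 $[\![O_{\phi_i}\psi]\!]_E=\{\omega:(G,G_{[\![\psi]\!]_E},\bar s(\omega))\models\phi_i\}$, $[\![\nu X.\psi]\!]_E$ = outcome of the transfinite iteration of $F\mapsto[\![\psi]\!]_F\cap F$ starting from $\Omega$ (successor: apply the operator; limit: intersect; stop at the first repetition). $\mathit{rat}_\phi=\bigwedge_i\mathit{rat}_{\phi_i}$, $\Box\psi=\bigwedge_i\Box_i\psi$, $O_\phi\psi=\bigwedge_iO_{\phi_i}\psi$, $\Box^*\psi:=\nu X.\Box(X\wedge\psi)$. *)

From mathcomp Require Import all_boot.
Set Implicit Arguments.
Unset Strict Implicit.
Unset Printing Implicit Defensive.

Definition profile (n : nat) (T : 'I_n -> Type) := forall i : 'I_n, T i.

(* (a, z_{-i}) : the profile z with the i-th component replaced by a. *)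
Definition upd (n : nat) (T : 'I_n -> Type) (z : profile T) (i : 'I_n) (a : T i)
  : profile T :=
  fun j => match @eqP _ i j with
           | ReflectT e => eq_rect i T a j e
           | ReflectF _ => z j
           end.

Definition strict_total_order (A : Type) (r : A -> A -> Prop) : Prop :=
  (forall x, ~ r x x) /\
  (forall x y z, r x y -> r y z -> r x z) /\
  (forall x y, r x y \/ x = y \/ r y x).

Definition geR (A : Type) (r : A -> A -> Prop) (x y : A) : Prop := x = y \/ r y x.

Definition restriction (n : nat) (T : 'I_n -> Type) := forall i : 'I_n, T i -> Prop.

Definition inC (n : nat) (T : 'I_n -> Type) (S : restriction T) (x : profile T) : Prop :=
  forall j, S j (x j).

Definition ge_at (n : nat) (T : 'I_n -> Type) (lt : 'I_n -> profile T -> profile T -> Prop)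
  (i : 'I_n) (z x y : profile T) : Prop :=
  @geR (profile T) (lt i) (@upd n T z i (x i)) (@upd n T z i (y i)).

Definition gbr (n : nat) (T : 'I_n -> Type) (lt : 'I_n -> profile T -> profile T -> Prop)
  (i : 'I_n) (S : restriction T) (s : profile T) : Prop :=
  exists z, inC S z /\ forall y, ge_at lt i z s y.

Definition lsd (n : nat) (T : 'I_n -> Type) (lt : 'I_n -> profile T -> profile T -> Prop)
  (i : 'I_n) (S : restriction T) (s : profile T) : Prop :=
  forall y, inC S y -> exists z, inC S z /\ ge_at lt i z s y.

Definition G_E (n : nat) (T : 'I_n -> Type) (Om : Type) (sbar : forall i, Om -> T i)
  (E : Om -> Prop) : restriction T :=
  fun i a => exists u, E u /\ sbar i u = a.

Definition sprof (n : nat) (T : 'I_n -> Type) (Om : Type) (sbar : forall i, Om -> T i)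
  (w : Om) : profile T := fun i => sbar i w.

Definition rat_sem (n : nat) (T : 'I_n -> Type) (Om : Type) (sbar : forall i, Om -> T i)
  (P : 'I_n -> Om -> Om -> Prop) (phi : 'I_n -> restriction T -> profile T -> Prop)
  : Om -> Prop :=
  fun w => forall i, phi i (G_E sbar (P i w)) (sprof sbar w).

Definition box_sem (n : nat) (Om : Type) (P : 'I_n -> Om -> Om -> Prop) (psi : Om -> Prop)
  : Om -> Prop :=
  fun w => forall i u, P i w u -> psi u.

Definition O_sem (n : nat) (T : 'I_n -> Type) (Om : Type) (sbar : forall i, Om -> T i)
  (phi : 'I_n -> restriction T -> profile T -> Prop) (psi : Om -> Prop) : Om -> Prop :=
  fun w => forall i, phi i (G_E sbar psi) (sprof sbar w).

(* Stages of the transfinite iteration of F |-> h(F) /\ F starting from Omega: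
   the least family containing Omega, closed under the step and under
   intersections (limit stages).  (Zermelo tower.) *)
Inductive tower (Om : Type) (h : (Om -> Prop) -> (Om -> Prop)) : (Om -> Prop) -> Prop :=
| tower_step F : tower h F -> tower h (fun w => h F w /\ F w)
| tower_inter (K : (Om -> Prop) -> Prop) :
    (forall F, K F -> tower h F) -> tower h (fun w => forall F, K F -> F w).

(* Outcome of the iteration = the last (smallest) stage = intersection of all stages.
   [[nu X. psi]] = nu_sem (fun F => [[psi]]_F). *)
Definition nu_sem (Om : Type) (h : (Om -> Prop) -> (Om -> Prop)) : Om -> Prop :=
  fun w => forall F, tower h F -> F w.

Definition boxstar_sem (n : nat) (Om : Type) (P : 'I_n -> Om -> Om -> Prop)
  (psi : Om -> Prop) : Om -> Prop :=
  nu_sem (fun F => box_sem P (fun u => F u /\ psi u)).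

From mathcomp Require Import all_boot.

Set Implicit Arguments.
Unset Strict Implicit.

(* A gbr witness for a restriction S is an lsd witness for every larger
   restriction.  Since every state in P_i(w) lies in E = [[rat_gbr]] /\
   [[Box^* rat_gbr]] whenever w does, E <= F implies E <= [[O_lsd X]]_F, so by
   induction over the stages of the iteration E lies inside each of them. *)

Section Greatest_fixpoint.

Variables (Om : Type) (h : (Om -> Prop) -> Om -> Prop).

Lemma nu_sem_coind (E : Om -> Prop) :
  (forall F, (forall w, E w -> F w) -> forall w, E w -> h F w) ->
  forall w, E w -> nu_sem h w.
Proof.
move=> hE w Ew F towerF.
elim: towerF w Ew => [F' _ IH | K _ IH] w Ew; first by split; [exact: hE | exact: IH].
by move=> F' KF'; exact: IH.
Qed.

Lemma nu_sem_unfold w : nu_sem h w -> h (nu_sem h) w.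
Proof.
move=> nu_w.
have tower_nu : tower h (nu_sem h) by apply: tower_inter.
exact: (nu_w _ (tower_step tower_nu)).1.
Qed.

End Greatest_fixpoint.

Lemma boxstar_sem_succ (n : nat) (Om : Type) (P : 'I_n -> Om -> Om -> Prop)
    (psi : Om -> Prop) (i : 'I_n) (w u : Om) :
  boxstar_sem P psi w -> P i w u -> boxstar_sem P psi u /\ psi u.
Proof.
by move=> /(@nu_sem_unfold _ (fun F => box_sem P (fun v => F v /\ psi v))); apply.
Qed.

Lemma inC_G_E_sub (n : nat) (T : 'I_n -> Type) (Om : Type)
    (sbar : forall i, Om -> T i) (E E' : Om -> Prop) (z : profile T) :
  (forall u, E u -> E' u) -> inC (G_E sbar E) z -> inC (G_E sbar E') z.
Proof. by move=> sub_EE' Ez j; case: (Ez j) => u [/sub_EE' E'u <-]; exists u. Qed.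

Lemma gbr_lsd_sub (n : nat) (T : 'I_n -> Type)
    (lt : 'I_n -> profile T -> profile T -> Prop) (i : 'I_n)
    (S S' : restriction T) (s : profile T) :
  (forall z, inC S z -> inC S' z) -> gbr lt i S s -> lsd lt i S' s.
Proof. by move=> sub_SS' [z [Sz ge_z]] y _; exists z; split; [exact: sub_SS' | exact: ge_z]. Qed.

Theorem mainTheorem4
  (n : nat) (T : 'I_n -> Type) (lt : 'I_n -> profile T -> profile T -> Prop)
  (HT : forall i, inhabited (T i))
  (Hlt : forall i, strict_total_order (lt i))
  (Om : Type) (HOm : inhabited Om)
  (sbar : forall i, Om -> T i) (P : 'I_n -> Om -> Om -> Prop) :
  forall w : Om,
    rat_sem sbar P (gbr lt) w ->
    boxstar_sem P (rat_sem sbar P (gbr lt)) w ->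
    nu_sem (fun F => O_sem sbar (lsd lt) F) w.
Proof.
pose rat := rat_sem sbar P (gbr lt).
move=> w rat_w box_w.
apply: (@nu_sem_coind _ _ (fun v => rat v /\ boxstar_sem P rat v) _ w (conj rat_w box_w)).
move=> F sub_EF {rat_w box_w}w [rat_w box_w] i.
apply: gbr_lsd_sub (rat_w i) => z; apply: inC_G_E_sub => u Piwu.
have [box_u rat_u] := boxstar_sem_succ box_w Piwu.
exact: sub_EF.
Qed.
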